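(* Let $m\in\mathbb N$ and let $t$ be a finite rooted ordered tree with $\dim(t)=2m$. Then there are trees $t',t_1,\dots,t_n$ with $\dim(t'),\dim(t_1),\dots,\dim(t_n)\le m$ such that $t=t'[t_1,\dots,t_n]$.
   Context: The dimension of a finite rooted ordered tree is defined inductively: (i) if $t$ has no children, $\dim(t)=0$; (ii) if $t$ has exactly one child $t_1$, $\dim(t)=\dim(t_1)$; (iii) if $t$ has at least two children, let $t_1,t_2$ be children of highest dimension, i.e. $\dim(t_1)\ge\dim(t_2)$ and $\dim(t_2)\ge\dim(t'')$ for every child $t''\ne t_1$; then $\dim(t)=\dim(t_1)+1$ if $\dim(t_1)=\dim(t_2)$, and $\dim(t)=\dim(t_1)$ if $\dim(t_1)>\dim(t_2)$. If $t'$ is a tree with leaves $l_1,\dots,l_n$ (from left to right) and $t_1,\dots,t_n$ are trees, $t'[t_1,\dots,t_n]$ denotes the tree obtained from $t'$ by replacing each leaf $l_i$ with $t_i$. *)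

From mathcomp Require Import all_boot.
Set Implicit Arguments. Unset Strict Implicit. Unset Printing Implicit Defensive.

Inductive tree : Type := Node of list tree.

Definition dim_of_children (ds : seq nat) : nat :=
  match sort geq ds with
  | [::] => 0
  | [:: d] => d
  | d1 :: d2 :: _ => if d1 == d2 then d1.+1 else d1
  end.

Fixpoint dim (t : tree) : nat :=
  match t with Node cs => dim_of_children (map dim cs) end.

Fixpoint nleaves (t : tree) : nat :=
  match t with
  | Node [::] => 1
  | Node cs => sumn (map nleaves cs)
  end.

(* Replace the leaves of t, from left to right, by the trees of ts;
   returns the new tree and the unused trees. *)
Fixpoint subst_aux (t : tree) (ts : seq tree) : tree * seq tree :=
  match t with
  | Node [::] =>
      match ts with
      | [::] => (t, [::])
      | u :: ts' => (u, ts')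
      end
  | Node cs =>
      let fix go (cs : list tree) (ts : seq tree) : list tree * seq tree :=
        match cs with
        | [::] => ([::], ts)
        | c :: cs' =>
            let (c', ts1) := subst_aux c ts in
            let (cs'', ts2) := go cs' ts1 in (c' :: cs'', ts2)
        end in
      let (cs', ts') := go cs ts in (Node cs', ts')
  end.

(* t'[t_1,...,t_n] (meaningful when n = nleaves t'). *)
Definition subst (t' : tree) (ts : seq tree) : tree := (subst_aux t' ts).1.

From mathcomp Require Import all_boot.
From mathcomp Require Import zify.

(* Cut [t] along its maximal subtrees of dimension at most [m]: these are the
   [t_i], and what remains above them is [t']. Each child of a node of [t']
   either had dimension at most [m] and became a leaf, or (inductively) lost at
   least [m] in dimension; as the dimension of a node is determined by the two
   largest dimensions of its children, the node loses at least [m] as well.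
   Hence [dim t' <= dim t - m = m]. *)

Lemma dim_of_children_leE k ds :
  (dim_of_children ds <= k) = all (leq^~ k) ds && (count_mem k ds <= 1).
Proof.
have perm_ds : perm_eq (sort geq ds) ds by rewrite perm_sort.
rewrite -(perm_all _ perm_ds) -(permP perm_ds) /dim_of_children.
have : sorted geq (sort geq ds) by apply: sort_sorted => x y; apply: leq_total.
case: (sort geq ds) => [|d1 [|d2 r]] //=.
  by rewrite andbT addn0 leq_b1 andbT.
move=> /andP [le_d2_d1 path_r].
have le_r_d2 : all (geq d2) r.
  by apply: order_path_min path_r => x y z yx zy; apply: leq_trans zy yx.
case: (leqP d2 k) => [le_d2_k | lt_k_d2]; last first.
  by rewrite andbF /=; case: eqP; lia.
have -> : all (leq^~ k) r.
  by apply/allP => y /(allP le_r_d2) /=; lia.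
have [lt_d2_k | ge_d2_k] := ltnP d2 k.
  have -> : count_mem k r = 0.
    apply/eqP; rewrite -leqn0 leqNgt -has_count; apply/hasPn => y /(allP le_r_d2) /=.
    by move=> ?; apply/eqP; lia.
  rewrite addn0 (ltn_eqF lt_d2_k) /= addn0 leq_b1 !andbT.
  by case: eqP => [->|//]; rewrite lt_d2_k ltnW.
have {ge_d2_k le_d2_k} <- : d2 = k by apply/eqP; rewrite eqn_leq le_d2_k.
rewrite eqxx /= !andbT; case: eqP => [->|ne_d1_d2].
  by rewrite ltnn leqnn /= !add1n.
have lt_d2_d1 : d2 < d1 by rewrite ltn_neqAle le_d2_d1 andbT eq_sym; apply/eqP.
by rewrite leqNgt lt_d2_d1.
Qed.

(* Through [dim_of_children_leE]; [m < n] guarantees that a child reaching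
   [n - m] came from a child of dimension exactly [n]. *)
Lemma dim_of_children_sub m (ds es : seq nat) :
  all2 (fun e d => e <= d - m) es ds -> m < dim_of_children ds ->
  dim_of_children es <= dim_of_children ds - m.
Proof.
set n := dim_of_children ds => le_es_ds lt_m_n.
have /andP [le_ds_n count_n] : all (leq^~ n) ds && (count_mem n ds <= 1).
  by rewrite -dim_of_children_leE.
clearbody n; rewrite dim_of_children_leE.
suff [-> le_count] : all (leq^~ (n - m)) es /\ count_mem (n - m) es <= count_mem n ds.
  exact: leq_trans le_count count_n.
elim: es ds le_es_ds le_ds_n {count_n} => [|e es IH] [|d ds] //= /andP [le_e_d le_es_ds].
move=> /andP [le_d_n le_ds_n]; have [-> IHcount] := IH ds le_es_ds le_ds_n.
split; first by rewrite andbT; lia.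
by apply: leq_add IHcount; case: eqP => // ?; case: eqP => //; lia.
Qed.

Definition all_children (P : tree -> Prop) (cs : seq tree) : Prop :=
  foldr (fun c acc => P c /\ acc) True cs.

Fixpoint tree_ind_children (P : tree -> Prop)
    (IH : forall cs, all_children P cs -> P (Node cs)) (t : tree) : P t :=
  let: Node cs := t in
  IH cs ((fix children (cs : seq tree) : all_children P cs :=
            match cs return all_children P cs with
            | [::] => I
            | c :: cs' => conj (tree_ind_children P IH c) (children cs')
            end) cs).

(* The local fixpoint of [subst_aux], given a name to rewrite with. *)
Fixpoint subst_children (cs : seq tree) (ts : seq tree) : seq tree * seq tree :=
  if cs is c :: cs' then
    let (c', ts1) := subst_aux c ts in
    let (cs'', ts2) := subst_children cs' ts1 in (c' :: cs'', ts2)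
  else ([::], ts).

Lemma nleaves_Node cs : 0 < size cs -> nleaves (Node cs) = sumn (map nleaves cs).
Proof. by case: cs. Qed.

Lemma dim_Node cs : dim (Node cs) = dim_of_children (map dim cs).
Proof. by []. Qed.

Lemma subst_aux_Node c cs ts :
  subst_aux (Node (c :: cs)) ts =
  let (cs', ts') := subst_children (c :: cs) ts in (Node cs', ts').
Proof. by []. Qed.

Section Prune.

Variable m : nat.

Fixpoint prune (t : tree) : tree * seq tree :=
  if dim t <= m then (Node [::], [:: t]) else
  let: Node cs := t in
  (Node (map (fun c => (prune c).1) cs), flatten (map (fun c => (prune c).2) cs)).

Lemma prune_large c cs : m < dim (Node (c :: cs)) ->
  prune (Node (c :: cs)) =
  (Node (map (fun c => (prune c).1) (c :: cs)),
   flatten (map (fun c => (prune c).2) (c :: cs))).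
Proof. by rewrite ltnNge /= => /negbTE ->. Qed.

Lemma prune_small t : dim t <= m -> prune t = (Node [::], [:: t]).
Proof. by case: t => cs /= ->. Qed.

Lemma prune_cases (P : tree -> Prop) :
  (forall t, dim t <= m -> P t) ->
  (forall c cs, m < dim (Node (c :: cs)) -> all_children P (c :: cs) ->
     P (Node (c :: cs))) ->
  forall t, P t.
Proof.
move=> small large; elim/tree_ind_children => -[|c cs] IH.
  exact: small.
by case: (leqP (dim (Node (c :: cs))) m) => [/small | /large]; apply.
Qed.

Lemma subst_aux_prune t rest :
  subst_aux (prune t).1 ((prune t).2 ++ rest) = (t, rest).
Proof.
elim/prune_cases: t rest => [t /prune_small -> //|c cs large IH rest].
rewrite prune_large //; cbn [fst snd]; rewrite subst_aux_Node.
suff -> : subst_children (map (fun c => (prune c).1) (c :: cs))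
            (flatten (map (fun c => (prune c).2) (c :: cs)) ++ rest) = (c :: cs, rest).
  by [].
elim: (c :: cs) IH {large} => [|x xs IHxs] //= [IHx /IHxs IHrest].
by rewrite -catA IHx IHrest.
Qed.

Lemma size_prune t : size (prune t).2 = nleaves (prune t).1.
Proof.
elim/prune_cases: t => [t /prune_small -> //|c cs large IH].
rewrite prune_large //; cbn [fst snd]; rewrite nleaves_Node ?size_map //.
elim: (c :: cs) IH {large} => [|x xs IHxs] //= [IHx /IHxs IHrest].
by rewrite size_cat IHx IHrest.
Qed.

Lemma all_dim_prune t : all (fun u => dim u <= m) (prune t).2.
Proof.
elim/prune_cases: t => [t small|c cs large IH]; first by rewrite prune_small //= small.
rewrite prune_large //; cbn [fst snd].
elim: (c :: cs) IH {large} => [|x xs IHxs] //= [IHx /IHxs IHrest].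
by rewrite all_cat IHx IHrest.
Qed.

Lemma dim_prune t : dim (prune t).1 <= dim t - m.
Proof.
elim/prune_cases: t => [t /prune_small -> //|c cs large IH].
rewrite prune_large //; cbn [fst snd]; rewrite !dim_Node.
apply: dim_of_children_sub; last by rewrite -dim_Node.
elim: (c :: cs) IH {large} => [|x xs IHxs] //= [IHx /IHxs IHrest].
by rewrite IHx IHrest.
Qed.

End Prune.

Theorem lemma5 (m : nat) (t : tree) :
  dim t = 2 * m ->
  exists (t' : tree) (ts : seq tree),
    size ts = nleaves t' /\
    dim t' <= m /\
    all (fun u => dim u <= m) ts /\
    t = subst t' ts.
Proof.
move=> dim_t; exists (prune m t).1, (prune m t).2; split; first exact: size_prune.
split.
  by have := dim_prune m t; rewrite dim_t mul2n -addnn addnK.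
split; first exact: all_dim_prune.
by rewrite /subst -[(prune m t).2]cats0 subst_aux_prune.
Qed.
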